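(* Let $F$ be a field with $\mathrm{char}\,F\ne2,3$ and let $\mathrm{Gr}_3$ be the Grassmann algebra over $F$ of a 3-dimensional vector space. Then $\mathrm{rb}(\mathrm{Gr}_3)=3$.
   Context: A linear operator $R$ on $A$ is a Rota–Baxter operator of weight $0$ if $R(x)R(y)=R(R(x)y+xR(y))$ for all $x,y\in A$. The RB-index $\mathrm{rb}(A)$ is the least $n\in\mathbb N$ such that $R^n=0$ for every Rota–Baxter operator $R$ of weight zero on $A$. *)

From HB Require Import structures.
From mathcomp Require Import all_boot all_order all_algebra.
Set Implicit Arguments. Unset Strict Implicit. Unset Printing Implicit Defensive.
Import Order.TTheory GRing.Theory Num.Theory.
Local Open Scope ring_scope.

(* The Grassmann (exterior) algebra Gr_n over F of an n-dimensional vector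
   space with basis e_0,...,e_{n-1}: as an F-vector space it has basis
   e_S (S a subset of {0..n-1}), e_S = e_{s1} ... e_{sk} with s1 < ... < sk.
   Elements are coefficient functions S |-> coefficient of e_S. *)
Definition Grass (F : fieldType) (n : nat) := {ffun {set 'I_n} -> F^o}.

(* sign of e_S e_T = (-1)^(number of pairs s in S, t in T with t < s) e_{S u T} *)
Definition gsign (F : fieldType) (n : nat) (S T : {set 'I_n}) : F :=
  (-1) ^+ #|[set p : 'I_n * 'I_n | [&& p.1 \in S, p.2 \in T & (p.2 < p.1)%N]]|.

Definition gmul (F : fieldType) (n : nat) (x y : Grass F n) : Grass F n :=
  [ffun U : {set 'I_n} =>
     \sum_(S : {set 'I_n}) \sum_(T : {set 'I_n})
        (if [disjoint S & T] && (S :|: T == U)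
         then @gsign F n S T * x S * y T else 0)].

Definition is_RB0 (F : fieldType) (V : lmodType F) (mul : V -> V -> V)
  (R : {linear V -> V}) : Prop :=
  forall x y : V, mul (R x) (R y) = R (mul (R x) y + mul x (R y)).

Definition pow_zero (F : fieldType) (V : lmodType F) (R : V -> V) (m : nat) :=
  forall x : V, iter m R x = 0.

Definition rb_index_is (F : fieldType) (V : lmodType F) (mul : V -> V -> V)
  (n : nat) : Prop :=
  (forall R : {linear V -> V}, is_RB0 mul R -> pow_zero R n) /\
  (forall m : nat,
     (forall R : {linear V -> V}, is_RB0 mul R -> pow_zero R m) -> (n <= m)%N).

From HB Require Import structures.
From mathcomp Require Import all_boot all_order all_algebra.
From mathcomp Require Import ring.
Set Implicit Arguments. Unset Strict Implicit. Unset Printing Implicit Defensive.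
Import GRing.Theory.
Local Open Scope ring_scope.

(* Let R be a Rota-Baxter operator of weight 0 on Gr_3, with basis e_S for
   S a subset of {0,1,2}, let s(x) be the scalar part (coefficient of e_{}) and
   let a = R(1).  The image of R lies in the ideal N = ker s: the powers of R(x)
   stay in the image of R and (R(x) - s(R(x)))^3 = 0, so s(R(x)) != 0 would put
   1 in the image, which is impossible.  From a^2 = 2 R(a) and the structure of
   N (squares lie in F e_012, xyx = 0, and xy + yx = 2 s(y) x modulo F e_012)
   one gets R(a) in F e_012, R(R(a)) = 0 (using 3 != 0), R(a R(y)) = 0 and
   a R(a y) = 0 (using 2 != 0), whence
   R^3(y) = a R(R(y)) - R(a R(y)) = - a R(a y) = 0.  Conversely
   x |-> s(x) (e_0 + e_12) + x_0 e_012, with x_0 the coefficient of e_0, is a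
   Rota-Baxter operator sending 1 to e_0 + e_12 and then to e_012, so R^2 need
   not vanish. *)

Lemma half_diff_add (F : fieldType) (V : lmodType F) (v w : V) :
  (2%:R : F) != 0 -> v = 2%:R^-1 *: (v - w) + 2%:R^-1 *: (v + w).
Proof.
move=> two_neq0; rewrite -scalerDr addrACA addNr addr0 -mulr2n -scaler_nat.
by rewrite scalerA mulVf ?scale1r.
Qed.

Lemma pow_zero_le (F : fieldType) (V : lmodType F) (R : V -> V) m n :
  R 0 = 0 -> (m <= n)%N -> pow_zero R m -> pow_zero R n.
Proof.
move=> R0 le_mn Rm x; rewrite -(subnK le_mn) iterD Rm.
by elim: (n - m)%N => //= k ->.
Qed.

Section UnitalRotaBaxter.
Variables (F : fieldType) (V : lmodType F) (mul : V -> V -> V) (one : V).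
Hypotheses (mul1l : left_id one mul) (mul1r : right_id one mul).
Variable R : {linear V -> V}.
Hypothesis RB : is_RB0 mul R.

Lemma RB_image_one w : R w = one -> one = 0.
Proof.
move=> Rw; have := RB w w; rewrite Rw !mul1l mul1r linearD Rw => one_double.
by apply: (addrI one); rewrite addr0 -one_double.
Qed.

Lemma RB_onel y : mul (R one) (R y) = R (mul (R one) y) + R (R y).
Proof. by rewrite RB mul1l linearD. Qed.

Lemma RB_oner y : mul (R y) (R one) = R (R y) + R (mul y (R one)).
Proof. by rewrite RB mul1r linearD. Qed.

Lemma RB_commute_one y :
  mul (R one) (R y) - mul (R y) (R one) = R (mul (R one) y - mul y (R one)).
Proof. by rewrite RB_onel RB_oner addrKA linearB. Qed.

End UnitalRotaBaxter.

Definition i0 : 'I_3 := @Ordinal 3 0 isT.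
Definition i1 : 'I_3 := @Ordinal 3 1 isT.
Definition i2 : 'I_3 := @Ordinal 3 2 isT.

Definition set3 (b0 b1 b2 : bool) : {set 'I_3} :=
  [set i : 'I_3 | nth false [:: b0; b1; b2] i].
Arguments set3 : simpl never.

Lemma ord3P (P : 'I_3 -> Prop) : P i0 -> P i1 -> P i2 -> forall i, P i.
Proof.
move=> P0 P1 P2 [[|[|[|k]]] lt_k3] //.
- by rewrite (_ : Ordinal lt_k3 = i0) //; apply: val_inj.
- by rewrite (_ : Ordinal lt_k3 = i1) //; apply: val_inj.
- by rewrite (_ : Ordinal lt_k3 = i2) //; apply: val_inj.
Qed.

Lemma set3E (S : {set 'I_3}) : S = set3 (i0 \in S) (i1 \in S) (i2 \in S).
Proof. by apply/setP; apply: ord3P; rewrite inE. Qed.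

Lemma set0_set3 : set0 = set3 false false false.
Proof. by apply/setP; apply: ord3P; rewrite !inE. Qed.

Lemma setT_set3 : setT = set3 true true true.
Proof. by apply/setP; apply: ord3P; rewrite !inE. Qed.

Lemma eqset3 b0 b1 b2 c0 c1 c2 :
  (set3 b0 b1 b2 == set3 c0 c1 c2) = [&& b0 == c0, b1 == c1 & b2 == c2].
Proof.
apply/eqP/and3P => [eqS|[/eqP-> /eqP-> /eqP->]] //.
have mem_eq i := congr1 (fun S : {set 'I_3} => i \in S) eqS.
by move: (mem_eq i0) (mem_eq i1) (mem_eq i2); rewrite !inE /= => -> -> ->.
Qed.

Lemma setU_set3 b0 b1 b2 c0 c1 c2 :
  set3 b0 b1 b2 :|: set3 c0 c1 c2 = set3 (b0 || c0) (b1 || c1) (b2 || c2).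
Proof. by apply/setP; apply: ord3P; rewrite !inE. Qed.

Lemma disjoint_set3 b0 b1 b2 c0 c1 c2 :
  [disjoint set3 b0 b1 b2 & set3 c0 c1 c2] = ~~ [|| b0 && c0, b1 && c1 | b2 && c2].
Proof.
apply/pred0P/idP => [disj|].
  by move: (disj i0) (disj i1) (disj i2); rewrite /= !inE /= => -> -> ->.
move=> disj; apply: ord3P; rewrite /= !inE /=; move: disj;
  by case: b0; case: b1; case: b2; case: c0; case: c1; case: c2.
Qed.

Lemma gsign_set3 (F : fieldType) b0 b1 b2 c0 c1 c2 :
  @gsign F 3 (set3 b0 b1 b2) (set3 c0 c1 c2) =
  (-1) ^+ ((b1 && c0) + (b2 && c0) + (b2 && c1))%N.
Proof.
rewrite /gsign; congr (_ ^+ _); set A := [set _ | _].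
rewrite -sum1_card big_mkcond /=.
pose inA (i j : 'I_3) := (if (i, j) \in A then 1 else 0)%N.
rewrite (eq_bigr (fun p : 'I_3 * 'I_3 => inA p.1 p.2)); last by move=> [].
rewrite -(pair_bigA _ inA) /= !big_ord_recr !big_ord0 /inA /A /= !inE /=.
by clear inA A; case: b0; case: b1; case: b2; case: c0; case: c1; case: c2.
Qed.

Lemma big_set3 (M : nmodType) (G : {set 'I_3} -> M) :
  \sum_(S : {set 'I_3}) G S =
  \sum_(b0 : bool) \sum_(b1 : bool) \sum_(b2 : bool) G (set3 b0 b1 b2).
Proof.
pose s3 (p : bool * bool * bool) := set3 p.1.1 p.1.2 p.2.
pose bits (S : {set 'I_3}) := (i0 \in S, i1 \in S, i2 \in S).
rewrite (reindex s3); last first.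
  by exists bits => [[[b0 b1] b2]|S] _; rewrite /bits /s3 /= ?inE // -set3E.
by rewrite [RHS]pair_bigA [RHS]pair_bigA.
Qed.

Lemma gmul_set3 (F : fieldType) (x y : Grass F 3) u0 u1 u2 :
  gmul x y (set3 u0 u1 u2) =
  \sum_(s0 : bool) \sum_(s1 : bool) \sum_(s2 : bool)
  \sum_(t0 : bool) \sum_(t1 : bool) \sum_(t2 : bool)
   (if ~~ [|| s0 && t0, s1 && t1 | s2 && t2] &&
       [&& (s0 || t0) == u0, (s1 || t1) == u1 & (s2 || t2) == u2]
    then (-1) ^+ ((s1 && t0) + (s2 && t0) + (s2 && t1))%N
         * x (set3 s0 s1 s2) * y (set3 t0 t1 t2) else 0).
Proof.
rewrite ffunE big_set3; apply: eq_bigr => s0 _; apply: eq_bigr => s1 _.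
apply: eq_bigr => s2 _; rewrite big_set3; apply: eq_bigr => t0 _.
apply: eq_bigr => t1 _; apply: eq_bigr => t2 _.
by rewrite disjoint_set3 setU_set3 eqset3 gsign_set3.
Qed.

Section Grassmann3.
Variable F : fieldType.
Local Notation G := (Grass F 3).
Local Notation "x ** y" := (@gmul F 3 x y) (at level 40, left associativity).

Lemma gmul000 (x y : G) : (x ** y) (set3 false false false) =
  x (set3 false false false) * y (set3 false false false).
Proof. rewrite gmul_set3 !big_bool /=; ring. Qed.

Lemma gmul001 (x y : G) : (x ** y) (set3 false false true) =
  x (set3 false false false) * y (set3 false false true)
  + x (set3 false false true) * y (set3 false false false).
Proof. rewrite gmul_set3 !big_bool /=; ring. Qed.

Lemma gmul010 (x y : G) : (x ** y) (set3 false true false) =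
  x (set3 false false false) * y (set3 false true false)
  + x (set3 false true false) * y (set3 false false false).
Proof. rewrite gmul_set3 !big_bool /=; ring. Qed.

Lemma gmul011 (x y : G) : (x ** y) (set3 false true true) =
  x (set3 false false false) * y (set3 false true true)
  - x (set3 false false true) * y (set3 false true false)
  + x (set3 false true false) * y (set3 false false true)
  + x (set3 false true true) * y (set3 false false false).
Proof. rewrite gmul_set3 !big_bool /=; ring. Qed.

Lemma gmul100 (x y : G) : (x ** y) (set3 true false false) =
  x (set3 false false false) * y (set3 true false false)
  + x (set3 true false false) * y (set3 false false false).
Proof. rewrite gmul_set3 !big_bool /=; ring. Qed.

Lemma gmul101 (x y : G) : (x ** y) (set3 true false true) =
  x (set3 false false false) * y (set3 true false true)
  - x (set3 false false true) * y (set3 true false false)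
  + x (set3 true false false) * y (set3 false false true)
  + x (set3 true false true) * y (set3 false false false).
Proof. rewrite gmul_set3 !big_bool /=; ring. Qed.

Lemma gmul110 (x y : G) : (x ** y) (set3 true true false) =
  x (set3 false false false) * y (set3 true true false)
  - x (set3 false true false) * y (set3 true false false)
  + x (set3 true false false) * y (set3 false true false)
  + x (set3 true true false) * y (set3 false false false).
Proof. rewrite gmul_set3 !big_bool /=; ring. Qed.

Lemma gmul111 (x y : G) : (x ** y) (set3 true true true) =
  x (set3 false false false) * y (set3 true true true)
  + x (set3 false false true) * y (set3 true true false)
  - x (set3 false true false) * y (set3 true false true)
  + x (set3 false true true) * y (set3 true false false)
  + x (set3 true false false) * y (set3 false true true)
  - x (set3 true false true) * y (set3 false true false)
  + x (set3 true true false) * y (set3 false false true)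
  + x (set3 true true true) * y (set3 false false false).
Proof. rewrite gmul_set3 !big_bool /=; ring. Qed.

Lemma coordD (x y : G) S : (x + y) S = x S + y S.
Proof. by rewrite ffunE. Qed.

Lemma coordN (x : G) S : (- x) S = - x S.
Proof. by rewrite ffunE. Qed.

Lemma coordZ (k : F) (x : G) S : (k *: x) S = k * x S.
Proof. by rewrite ffunE. Qed.

Lemma coord0 S : (0 : G) S = 0.
Proof. by rewrite ffunE. Qed.

Definition gbasis (S : {set 'I_3}) : G := [ffun T => if T == S then 1 else 0].
Definition gone : G := gbasis set0.
Definition gtop : G := gbasis setT.
Definition gscalar (x : G) : F := x set0.

Lemma gbasisE S T : gbasis S T = if T == S then 1 else 0.
Proof. by rewrite ffunE. Qed.

Lemma gbasis_neq0 S : gbasis S != 0.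
Proof.
by apply/eqP => /ffunP/(_ S); rewrite gbasisE eqxx coord0; apply/eqP/oner_neq0.
Qed.

Lemma gscalar_one : gscalar gone = 1.
Proof. by rewrite /gscalar gbasisE eqxx. Qed.

Lemma gscalarD (x y : G) : gscalar (x + y) = gscalar x + gscalar y.
Proof. exact: coordD. Qed.

Lemma gscalarM (x y : G) : gscalar (x ** y) = gscalar x * gscalar y.
Proof. by rewrite /gscalar set0_set3 gmul000. Qed.

Lemma gmul_coord_e0 (x y : G) : (x ** y) (set3 true false false) =
  gscalar x * y (set3 true false false) + x (set3 true false false) * gscalar y.
Proof. by rewrite /gscalar set0_set3 gmul100. Qed.

Local Ltac coord_simpl :=
  repeat rewrite ?gmul000 ?gmul001 ?gmul010 ?gmul011 ?gmul100 ?gmul101 ?gmul110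
    ?gmul111 ?coordD ?coordN ?coordZ ?coord0 ?gbasisE ?eqset3 /=.

Local Ltac coords :=
  apply/ffunP; let U := fresh "U" in
  move=> U; rewrite (set3E U) /gone /gtop /gscalar ?set0_set3 ?setT_set3;
  case: (i0 \in U); case: (i1 \in U); case: (i2 \in U); coord_simpl.

Lemma gmulA (x y z : G) : x ** (y ** z) = x ** y ** z.
Proof. coords; ring. Qed.

Lemma gmulDl (x y z : G) : (x + y) ** z = x ** z + y ** z.
Proof. coords; ring. Qed.

Lemma gmulDr (x y z : G) : x ** (y + z) = x ** y + x ** z.
Proof. coords; ring. Qed.

Lemma gmulBr (x y z : G) : x ** (y - z) = x ** y - x ** z.
Proof. coords; ring. Qed.

Lemma gmulZl (k : F) (x y : G) : (k *: x) ** y = k *: (x ** y).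
Proof. coords; ring. Qed.

Lemma gmulZr (k : F) (x y : G) : x ** (k *: y) = k *: (x ** y).
Proof. coords; ring. Qed.

Lemma gmul0r (x : G) : x ** 0 = 0.
Proof. coords; ring. Qed.

Lemma gmul1l : left_id gone (@gmul F 3).
Proof. move=> x; coords; ring. Qed.

Lemma gmul1r : right_id gone (@gmul F 3).
Proof. move=> x; coords; ring. Qed.

Lemma gmul_topl (x : G) : gtop ** x = gscalar x *: gtop.
Proof. coords; ring. Qed.

Lemma gmul_topr (x : G) : x ** gtop = gscalar x *: gtop.
Proof. coords; ring. Qed.

Lemma gmul_cubic (u : G) (s := gscalar u) :
  u ** u ** u - (3%:R * s) *: (u ** u) + (3%:R * s ^+ 2) *: u - s ^+ 3 *: gone = 0.
Proof. rewrite /s; coords; ring. Qed.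

Lemma gmul_nil_sqr (x : G) : gscalar x = 0 -> x ** x = (x ** x) setT *: gtop.
Proof. rewrite /gscalar set0_set3 => x0; coords; rewrite ?x0; ring. Qed.

Lemma gmul_nil_sandwich (x y : G) :
  gscalar x = 0 -> gscalar y = 0 -> x ** y ** x = 0.
Proof. rewrite /gscalar set0_set3 => x0 y0; coords; rewrite ?x0 ?y0; ring. Qed.

Lemma gmul_nil_anticomm (x y : G) : gscalar x = 0 ->
  exists c, x ** y + y ** x = (2%:R * gscalar y) *: x + c *: gtop.
Proof.
rewrite /gscalar set0_set3 => x0.
exists ((x ** y + y ** x) setT - 2%:R * y set0 * x setT).
coords; rewrite ?x0; ring.
Qed.

Section RotaBaxterGr3.
Variable R : {linear G -> G}.
Hypothesis RB : is_RB0 (@gmul F 3) R.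
Local Notation a := (R gone).

Lemma RB_image_nil x : gscalar (R x) = 0.
Proof.
apply/eqP; apply: contraT => s_neq0; set s := gscalar (R x).
pose o y z := R y ** z + y ** R z.
have Rx2 : R x ** R x = R (o x x) by apply: RB.
have Rx3 : R x ** R x ** R x = R (o (o x x) x) by rewrite Rx2 RB.
pose w := o (o x x) x - (3%:R * s) *: o x x + (3%:R * s ^+ 2) *: x.
have Rw : R w = s ^+ 3 *: gone.
  apply/eqP; rewrite -subr_eq0 -(gmul_cubic (R x)) Rx3 Rx2.
  by rewrite /w !linearD !linearN !linearZZ.
have : R (s ^- 3 *: w) = gone.
  by rewrite linearZZ Rw scalerA mulVf ?scale1r // expf_neq0.
by move/(RB_image_one gmul1l gmul1r RB)/eqP; rewrite (negbTE (gbasis_neq0 _)).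
Qed.

Lemma R1_sqr : a ** a = R a + R a.
Proof. by rewrite RB gmul1l gmul1r linearD. Qed.

Hypotheses (two_neq0 : (2%:R : F) != 0) (three_neq0 : (3%:R : F) != 0).

Lemma RR1_top : R a = (2%:R^-1 * (a ** a) setT) *: gtop.
Proof.
apply: (scalerI two_neq0); rewrite scalerA mulrA mulfV // mul1r.
by rewrite -gmul_nil_sqr ?RB_image_nil // R1_sqr scaler_nat mulr2n.
Qed.

Lemma RR1_mull y : R a ** y = gscalar y *: R a.
Proof. by rewrite RR1_top gmulZl gmul_topl !scalerA mulrC. Qed.

Lemma RR1_mulr y : y ** R a = gscalar y *: R a.
Proof. by rewrite RR1_top gmulZr gmul_topr !scalerA mulrC. Qed.

Lemma RRR1 : R (R a) = 0.
Proof.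
have triple : R (R a) + (R (R a) + R (R a)) = 0.
  have := RB a gone; rewrite RR1_mull RB_image_nil scale0r gmul1r R1_sqr.
  by rewrite !linearD => <-.
apply: (scalerI three_neq0); rewrite scaler0 scaler_nat -triple.
by rewrite !mulrS mulr0n addr0.
Qed.

Lemma R_mul_R1_image y : R (a ** R y) = 0.
Proof.
have := RB a y; rewrite RR1_mull RB_image_nil scale0r linearD.
by rewrite RR1_mull linearZZ RRR1 scaler0 add0r.
Qed.

Lemma R1_mul_Rtop : a ** R gtop = 0.
Proof.
have a_top : a ** gtop = 0 by rewrite gmul_topr RB_image_nil scale0r.
have top_a : gtop ** a = 0 by rewrite gmul_topl RB_image_nil scale0r.
(* a and R(e_012) commute, so their product is half their anticommutator. *)
have comm : a ** R gtop = R gtop ** a.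
  rewrite (RB_onel gmul1l RB) (RB_oner gmul1r RB) a_top top_a.
  by rewrite linear0 add0r addr0.
have [c anti] := gmul_nil_anticomm a (RB_image_nil gtop).
rewrite RB_image_nil mulr0 scale0r add0r in anti.
have a_Rtop : a ** R gtop = (2%:R^-1 * c) *: gtop.
  apply: (scalerI two_neq0); rewrite scalerA mulrA mulfV // mul1r.
  by rewrite scaler_nat mulr2n {1}comm anti.
have := R_mul_R1_image gtop; rewrite a_Rtop linearZZ => /eqP.
rewrite scaler_eq0 => /orP[/eqP-> | /eqP Rtop0]; first by rewrite scale0r.
by rewrite -a_Rtop Rtop0 gmul0r.
Qed.

Lemma R1_mul_R1_mul_image y : a ** (a ** R y) = 0.
Proof. by rewrite gmulA R1_sqr gmulDl !RR1_mull RB_image_nil scale0r addr0. Qed.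

Lemma R1_mul_R_R1_mul y : a ** R (a ** y) = 0.
Proof.
have [c anti] := gmul_nil_anticomm y (RB_image_nil gone).
have R_ay : R (a ** y) = 2%:R^-1 *: (a ** R y - R y ** a)
    + 2%:R^-1 *: ((2%:R * gscalar y) *: R a + c *: R gtop).
  rewrite (half_diff_add (a ** y) (y ** a) two_neq0) anti linearD !linearZZ.
  by rewrite -(RB_commute_one gmul1l gmul1r RB) (linearD R) !linearZZ.
rewrite R_ay gmulDr !gmulZr gmulBr gmulDr !gmulZr R1_mul_R1_mul_image.
rewrite gmulA gmul_nil_sandwich ?RB_image_nil // RR1_mulr RB_image_nil R1_mul_Rtop.
by rewrite scale0r subr0 !scaler0 addr0 scaler0 addr0.
Qed.

Lemma RB_cube0 y : R (R (R y)) = 0.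
Proof.
have RR z : R (R z) = a ** R z - R (a ** z).
  by rewrite (RB_onel gmul1l RB) [_ + R (R z)]addrC addrK.
rewrite (RR (R y)) R_mul_R1_image subr0 (RR y) gmulBr.
by rewrite R1_mul_R1_mul_image R1_mul_R_R1_mul subr0.
Qed.

End RotaBaxterGr3.

Definition rb_extremal (x : G) : G :=
  gscalar x *: (gbasis (set3 true false false) + gbasis (set3 false true true))
  + x (set3 true false false) *: gtop.

Lemma rb_extremal_is_linear : linear rb_extremal.
Proof.
move=> k x y; rewrite /rb_extremal /gscalar !ffunE.
by rewrite !scalerDl !scalerDr !scalerA addrACA.
Qed.

HB.instance Definition _ :=
  GRing.isLinear.Build F G G *:%R rb_extremal rb_extremal_is_linear.

Lemma gscalar_rb_extremal x : gscalar (rb_extremal x) = 0.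
Proof.
by rewrite /gscalar /rb_extremal /gtop set0_set3 setT_set3; coord_simpl; ring.
Qed.

Lemma rb_extremal1 x : rb_extremal x (set3 true false false) = gscalar x.
Proof. rewrite /rb_extremal /gtop setT_set3; coord_simpl; ring. Qed.

Lemma rb_extremal_nil x :
  gscalar x = 0 -> rb_extremal x = x (set3 true false false) *: gtop.
Proof. by rewrite /rb_extremal => ->; rewrite scale0r add0r. Qed.

Lemma rb_extremal_mul x y :
  rb_extremal x ** rb_extremal y = (2%:R * gscalar x * gscalar y) *: gtop.
Proof. rewrite /rb_extremal; coords; ring. Qed.

Lemma rb_extremal_RB : is_RB0 (@gmul F 3) rb_extremal.
Proof.
move=> x y /=; rewrite rb_extremal_mul rb_extremal_nil; last first.
  by rewrite gscalarD !gscalarM !gscalar_rb_extremal mul0r mulr0 addr0.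
rewrite coordD !gmul_coord_e0 !rb_extremal1 !gscalar_rb_extremal.
by congr (_ *: _); ring.
Qed.

Lemma rb_extremal_sqr_one : rb_extremal (rb_extremal gone) = gtop.
Proof.
by rewrite rb_extremal_nil ?gscalar_rb_extremal // rb_extremal1 gscalar_one scale1r.
Qed.

End Grassmann3.

Theorem corollary12 (F : fieldType)
  (h2 : (2%:R : F) != 0) (h3 : (3%:R : F) != 0) :
  rb_index_is (@gmul F 3) 3.
Proof.
split=> [R RB x | m nil_m]; first exact: RB_cube0.
rewrite leqNgt; apply/negP => lt_m3.
have := pow_zero_le (linear0 _) (lt_m3 : (m <= 2)%N) (nil_m _ (@rb_extremal_RB F)).
move=> /(_ (gone F)) /=; rewrite rb_extremal_sqr_one; apply/eqP.
exact: gbasis_neq0.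
Qed.
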